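(* Let $p$ be a prime and $G=S^1\times C_p$. There exists a $G$-equivariant continuous map $h:S(V_{1,0}\oplus V_{1,1})\to S(V_{p,0}\oplus V_{0,1})$.
   Context: Let $a$ be a generator of $C_p$ and $\xi_p=e^{2\pi\sqrt{-1}/p}$. For $k\in\mathbb{Z}$ and $l\in\mathbb{Z}/p$, $V_{k,l}$ is the $1$-dimensional unitary $G$-representation on $\mathbb{C}$ with $(t,a^j)\cdot z=t^k\xi_p^{jl}z$ for $t\in S^1$. $S(\cdot)$ denotes the unit sphere. *)

From Stdlib Require Import Reals ZArith Znumtheory.
From Coquelicot Require Import Coquelicot.
Open Scope R_scope.

Fixpoint Cpown (z : C) (n : nat) : C :=
  match n with O => 1%C | S m => (z * Cpown z m)%C end.

Definition xi (p : nat) : C := (cos (2 * PI / INR p), sin (2 * PI / INR p)).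

(* G = S^1 x C_p; an element (t, a^j) is given by t : C with |t| = 1 and j : nat.
   Action on V_{k,l}:  (t, a^j) . z = t^k xi_p^{j l} z. *)
Definition actV (p k l : nat) (t : C) (j : nat) (z : C) : C :=
  (Cpown t k * Cpown (xi p) (j * l) * z)%C.

Definition actV2 (p k1 l1 k2 l2 : nat) (t : C) (j : nat) (x : C * C) : C * C :=
  (actV p k1 l1 t j (fst x), actV p k2 l2 t j (snd x)).

Definition in_sphere (x : C * C) : Prop :=
  Cmod (fst x) ^ 2 + Cmod (snd x) ^ 2 = 1.

Definition continuous_on_sphere (h : C * C -> C * C) : Prop :=
  forall x, in_sphere x -> forall eps, 0 < eps -> exists delta, 0 < delta /\
    forall y, in_sphere y ->
      Cmod (fst y - fst x) < delta -> Cmod (snd y - snd x) < delta ->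
      Cmod (fst (h y) - fst (h x)) < eps /\ Cmod (snd (h y) - snd (h x)) < eps.

(* Lemma 4.2.  For G = S^1 x C_p, the map
     h(z1, z2) = N(z1^p + z2^p, z2 * conj z1),   N(v) = v / |v|,
   is a G-equivariant continuous map S(V_{1,0} (+) V_{1,1}) -> S(V_{p,0} (+) V_{0,1}).

   Write w = xi_p^j.  The group element (t, a^j) acts on the source by
   (z1, z2) |-> (t z1, t w z2) and on the target by (u1, u2) |-> (t^p u1, w u2).
   The polynomial part intertwines the two actions because w^p = 1 and
   t conj t = 1, and the radial projection N commutes with rescaling each
   coordinate by a unit complex number.  The polynomial part has no zero on
   the unit sphere (for p > 0), so N is continuous along it.

   Primality of p is only used through p > 0. *)

From Stdlib Require Import Reals ZArith Znumtheory Lra Lia.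
From Coquelicot Require Import Coquelicot.
Open Scope R_scope.

Lemma Cmult_eq_0 (z w : C) : (z * w = 0)%C -> z = 0%C \/ w = 0%C.
Proof.
  intros H. apply (f_equal Cmod) in H. rewrite Cmod_mult, Cmod_0 in H.
  destruct (Rmult_integral _ _ H); [left | right]; apply Cmod_eq_0; assumption.
Qed.

Lemma Rpow_eq_0 (x : R) (n : nat) : x ^ n = 0 -> x = 0.
Proof.
  intros H. destruct (Req_dec x 0) as [|Hx]; [assumption|].
  exfalso. exact (pow_nonzero _ n Hx H).
Qed.

Lemma Cpow_eq_0 (z : C) (n : nat) : (z ^ n = 0)%C -> z = 0%C.
Proof.
  intros H. apply (f_equal Cmod) in H. rewrite Cmod_pow, Cmod_0 in H.
  apply Cmod_eq_0, (Rpow_eq_0 _ n H).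
Qed.

Lemma Cpow_0_l (n : nat) : (0 < n)%nat -> (0 ^ n = 0)%C.
Proof. intros Hn. destruct n as [|n]; [inversion Hn | simpl; apply Cmult_0_l]. Qed.

Section PointwiseContinuity.

Context {U : UniformSpace}.

Lemma continuous_pair {V W : UniformSpace} (f : U -> V) (g : U -> W) (x : U) :
  continuous f x -> continuous g x ->
  @continuous U (prod_UniformSpace V W) (fun y => (f y, g y)) x.
Proof.
  intros Hf Hg.
  apply (continuous_comp_2 f g (fun a b => (a, b))); auto.
  apply (continuous_ext (fun z : V * W => z)); [intros [a b]; reflexivity|].
  apply continuous_id.
Qed.

Lemma continuous_fst_comp {V W : UniformSpace} (f : U -> prod_UniformSpace V W) (x : U) :
  continuous f x -> continuous (fun y => fst (f y)) x.
Proof.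
  intros Hf. apply (continuous_comp f fst); auto.
  destruct (f x). apply continuous_fst.
Qed.

Lemma continuous_snd_comp {V W : UniformSpace} (f : U -> prod_UniformSpace V W) (x : U) :
  continuous f x -> continuous (fun y => snd (f y)) x.
Proof.
  intros Hf. apply (continuous_comp f snd); auto.
  destruct (f x). apply continuous_snd.
Qed.

Lemma continuous_Rmult (f g : U -> R) (x : U) :
  continuous f x -> continuous g x -> continuous (fun y => f y * g y) x.
Proof. exact (@continuous_mult U R_AbsRing f g x). Qed.

Lemma continuous_Rplus (f g : U -> R) (x : U) :
  continuous f x -> continuous g x -> continuous (fun y => f y + g y) x.
Proof. exact (@continuous_plus U R_AbsRing R_NormedModule f g x). Qed.

(* C carries two uniform structures (product of the real lines, and the
   absolute-value structure of the ring C); they have the same neighbourhoods,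
   so continuity does not depend on the choice. *)
Lemma continuous_C_AbsRing (f : U -> C) (x : U) :
  @continuous U C_UniformSpace f x <->
  @continuous U (AbsRing_UniformSpace C_AbsRing) f x.
Proof.
  split; intros Hf P HP; apply Hf, locally_C; exact HP.
Qed.

Lemma continuous_Cmult (f g : U -> C) (x : U) :
  continuous f x -> continuous g x -> continuous (fun y => f y * g y)%C x.
Proof.
  rewrite !continuous_C_AbsRing. exact (@continuous_mult U C_AbsRing f g x).
Qed.

Lemma continuous_Cplus (f g : U -> C) (x : U) :
  continuous f x -> continuous g x -> continuous (fun y => f y + g y)%C x.
Proof. exact (@continuous_plus U C_AbsRing C_NormedModule f g x). Qed.

Lemma continuous_Cpow (f : U -> C) (n : nat) (x : U) :
  continuous f x -> continuous (fun y => f y ^ n)%C x.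
Proof.
  intros Hf. induction n as [|n IH]; simpl.
  - apply continuous_const.
  - apply continuous_Cmult; auto.
Qed.

Lemma continuous_Cconj (f : U -> C) (x : U) :
  continuous f x -> continuous (fun y => Cconj (f y)) x.
Proof.
  intros Hf.
  apply (continuous_pair (fun y => fst (f y)) (fun y => - snd (f y))).
  - exact (continuous_fst_comp f x Hf).
  - exact (@continuous_opp U R_AbsRing R_NormedModule _ x (continuous_snd_comp f x Hf)).
Qed.

Lemma continuous_RtoC (f : U -> R) (x : U) :
  continuous f x -> continuous (fun y => RtoC (f y)) x.
Proof.
  intros Hf. apply (continuous_pair f (fun _ => 0)); auto. apply continuous_const.
Qed.

Lemma continuous_Cmod_sqr (f : U -> C) (x : U) :
  continuous f x -> continuous (fun y => Cmod (f y) ^ 2) x.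
Proof.
  intros Hf.
  assert (Hmod : continuous (fun y => Cmod (f y)) x).
  { apply (continuous_comp f (@norm C_AbsRing C_NormedModule)); auto.
    exact (filterlim_norm (f x)). }
  apply (continuous_ext (fun y => Cmod (f y) * Cmod (f y))); [intros y; simpl; ring|].
  apply continuous_Rmult; auto.
Qed.

End PointwiseContinuity.

Definition C2 : UniformSpace := prod_UniformSpace C_UniformSpace C_UniformSpace.

Lemma sqrt2_lt_2 : sqrt 2 < 2.
Proof. rewrite <- (sqrt_pow2 2) at 2 by lra. apply sqrt_lt_1; lra. Qed.

(* Pointwise continuity on C^2 at the points of the sphere implies the
   epsilon-delta continuity of [continuous_on_sphere]: a coordinatewise
   Cmod-bound is a ball of C2, and a ball of C2 of radius eps/2 gives
   coordinatewise Cmod-bounds sqrt 2 * eps/2 < eps. *)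
Lemma continuous_on_sphere_of_continuous (h : C * C -> C * C) :
  (forall x, in_sphere x -> @continuous C2 C2 h x) -> continuous_on_sphere h.
Proof.
  intros Hh x Hx eps Heps.
  assert (Heps2 : 0 < eps / 2) by lra.
  destruct (proj1 (filterlim_locally _ _) (Hh x Hx) (mkposreal _ Heps2))
    as [delta Hdelta].
  exists delta; split; [apply cond_pos|].
  intros y _ Hy1 Hy2.
  destruct (Hdelta y (conj (@norm_compat1 _ C_NormedModule _ _ _ Hy1)
                         (@norm_compat1 _ C_NormedModule _ _ _ Hy2)))
    as [Hb1 Hb2].
  apply (@norm_compat2 _ C_NormedModule) in Hb1.
  apply (@norm_compat2 _ C_NormedModule) in Hb2.
  change (@norm_factor _ C_NormedModule) with (sqrt 2) in Hb1, Hb2.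
  change (Cmod (fst (h y) - fst (h x)) < sqrt 2 * (eps / 2)) in Hb1.
  change (Cmod (snd (h y) - snd (h x)) < sqrt 2 * (eps / 2)) in Hb2.
  pose proof sqrt2_lt_2. split; nra.
Qed.

Definition sqnorm (v : C * C) : R := Cmod (fst v) ^ 2 + Cmod (snd v) ^ 2.

Lemma sqnorm_nonneg (v : C * C) : 0 <= sqnorm v.
Proof.
  unfold sqnorm.
  pose proof (pow2_ge_0 (Cmod (fst v))). pose proof (pow2_ge_0 (Cmod (snd v))). lra.
Qed.

Lemma sqnorm_eq_0 (v : C * C) : sqnorm v = 0 -> fst v = 0%C /\ snd v = 0%C.
Proof.
  unfold sqnorm. intros H.
  pose proof (pow2_ge_0 (Cmod (fst v))). pose proof (pow2_ge_0 (Cmod (snd v))).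
  split; apply Cmod_eq_0, (Rpow_eq_0 _ 2); lra.
Qed.

Definition normalize (v : C * C) : C * C :=
  let r := RtoC (/ sqrt (sqnorm v)) in (r * fst v, r * snd v)%C.

Lemma normalize_in_sphere (v : C * C) : 0 < sqnorm v -> in_sphere (normalize v).
Proof.
  intros Hv. unfold in_sphere, normalize; simpl. rewrite !Cmod_mult, !Cmod_R.
  assert (Hroot : 0 < sqrt (sqnorm v)) by (apply sqrt_lt_R0; exact Hv).
  rewrite Rabs_pos_eq by (left; apply Rinv_0_lt_compat; exact Hroot).
  assert (Hsq : sqrt (sqnorm v) ^ 2 = sqnorm v) by (apply pow2_sqrt; lra).
  unfold sqnorm in *. field_simplify; [|lra].
  rewrite Hsq. field. lra.
Qed.

Lemma continuous_sqnorm (v : C2) : continuous sqnorm v.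
Proof.
  apply continuous_Rplus; apply continuous_Cmod_sqr;
    [apply continuous_fst_comp | apply continuous_snd_comp]; apply continuous_id.
Qed.

Lemma continuous_normalize (v : C2) : 0 < sqnorm v -> @continuous C2 C2 normalize v.
Proof.
  intros Hv.
  assert (Hr : continuous (fun w : C2 => RtoC (/ sqrt (sqnorm w))) v).
  { apply continuous_RtoC, (continuous_comp (fun w => sqrt (sqnorm w)) Rinv).
    - apply (continuous_comp sqnorm sqrt); [apply continuous_sqnorm|].
      apply continuous_sqrt.
    - apply continuous_Rinv. apply Rgt_not_eq, sqrt_lt_R0, Hv. }
  apply continuous_pair; apply continuous_Cmult; auto;
    [apply continuous_fst_comp | apply continuous_snd_comp]; apply continuous_id.
Qed.

Lemma normalize_unitary (a b : C) (v : C * C) :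
  Cmod a = 1 -> Cmod b = 1 ->
  normalize ((a * fst v)%C, (b * snd v)%C)
  = ((a * fst (normalize v))%C, (b * snd (normalize v))%C).
Proof.
  intros Ha Hb.
  assert (Hsq : sqnorm ((a * fst v)%C, (b * snd v)%C) = sqnorm v).
  { unfold sqnorm; simpl. rewrite !Cmod_mult, Ha, Hb. ring. }
  unfold normalize. rewrite Hsq. simpl. f_equal; ring.
Qed.


Definition poly_map (p : nat) (x : C * C) : C * C :=
  (fst x ^ p + snd x ^ p, snd x * Cconj (fst x))%C.

Lemma continuous_poly_map (p : nat) (x : C2) : @continuous C2 C2 (poly_map p) x.
Proof.
  assert (H1 : continuous (fun y : C2 => fst y) x)
    by (apply continuous_fst_comp, continuous_id).
  assert (H2 : continuous (fun y : C2 => snd y) x)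
    by (apply continuous_snd_comp, continuous_id).
  apply continuous_pair.
  - apply continuous_Cplus; apply continuous_Cpow; assumption.
  - apply continuous_Cmult; [|apply continuous_Cconj]; assumption.
Qed.

(* For p > 0 the map has no zero on the sphere: z2 * conj z1 = 0 forces a
   coordinate to vanish, and then z1^p + z2^p = 0 forces the other to vanish. *)
Lemma poly_map_nonvanishing (p : nat) (x : C * C) :
  (0 < p)%nat -> in_sphere x -> 0 < sqnorm (poly_map p x).
Proof.
  intros Hp Hx. destruct x as [z1 z2].
  destruct (Rle_lt_or_eq_dec _ _ (sqnorm_nonneg (poly_map p (z1, z2))))
    as [Hpos | Hzero]; [exact Hpos | exfalso].
  destruct (sqnorm_eq_0 _ (eq_sym Hzero)) as [Hsum Hprod]; simpl in Hsum, Hprod.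
  assert (Hz : z1 = 0%C /\ z2 = 0%C).
  { destruct (Cmult_eq_0 _ _ Hprod) as [H2 | Hc1].
    - subst z2. rewrite Cpow_0_l, Cplus_0_r in Hsum by exact Hp.
      split; [exact (Cpow_eq_0 _ _ Hsum) | reflexivity].
    - assert (H1 : z1 = 0%C)
        by (apply Cmod_eq_0; rewrite <- Cmod_conj, Hc1; apply Cmod_0).
      subst z1. rewrite Cpow_0_l, Cplus_0_l in Hsum by exact Hp.
      split; [reflexivity | exact (Cpow_eq_0 _ _ Hsum)]. }
  destruct Hz as [-> ->]. unfold in_sphere in Hx; simpl in Hx.
  rewrite Cmod_0 in Hx. lra.
Qed.

Lemma poly_map_equivariant (p : nat) (t w : C) (x : C * C) :
  Cmod t = 1 -> (w ^ p = 1)%C ->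
  poly_map p ((t * fst x)%C, (t * w * snd x)%C)
  = ((t ^ p * fst (poly_map p x))%C, (w * snd (poly_map p x))%C).
Proof.
  intros Ht Hw.
  assert (Htt : (t * Cconj t = 1)%C)
    by (rewrite <- Cmod2_conj, Ht; apply injective_projections; simpl; ring).
  unfold poly_map; simpl. rewrite !Cpow_mult_l, Hw, Cmult_conj. f_equal.
  - ring.
  - transitivity (w * (snd x * Cconj (fst x)) * (t * Cconj t))%C; [ring|].
    rewrite Htt. ring.
Qed.

Lemma Cpown_Cpow (z : C) (n : nat) : Cpown z n = (z ^ n)%C.
Proof. induction n as [|n IH]; simpl; congruence. Qed.

Lemma xi_pow (p n : nat) :
  (xi p ^ n)%C = (cos (INR n * (2 * PI / INR p)), sin (INR n * (2 * PI / INR p))).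
Proof.
  induction n as [|n IH].
  - simpl. rewrite Rmult_0_l, cos_0, sin_0. reflexivity.
  - rewrite Cpow_S, IH, S_INR, Rmult_plus_distr_r, Rmult_1_l, Rplus_comm,
      cos_plus, sin_plus.
    unfold xi, Cmult; simpl. f_equal; ring.
Qed.

Lemma xi_pow_root_of_unity (p j : nat) : (0 < p)%nat -> ((xi p ^ j) ^ p = 1)%C.
Proof.
  intros Hp. rewrite <- Cpow_mult_r, Nat.mul_comm, Cpow_mult_r, xi_pow.
  replace (INR p * (2 * PI / INR p)) with (2 * PI)
    by (field; apply not_0_INR; lia).
  rewrite cos_2PI, sin_2PI. apply Cpow_1_l.
Qed.

Lemma Cmod_xi_pow (p j : nat) : Cmod (xi p ^ j) = 1.
Proof.
  rewrite Cmod_pow. replace (Cmod (xi p)) with 1; [apply pow1|].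
  unfold Cmod, xi; simpl. rewrite !Rmult_1_r.
  rewrite <- sqrt_1. f_equal.
  pose proof (sin2_cos2 (2 * PI / INR p)). unfold Rsqr in *. lra.
Qed.

Lemma act_source (p : nat) (t : C) (j : nat) (x : C * C) :
  actV2 p 1 0 1 1 t j x = ((t * fst x)%C, (t * xi p ^ j * snd x)%C).
Proof.
  unfold actV2, actV. rewrite Nat.mul_0_r, Nat.mul_1_r.
  cbn [Cpown fst snd]. rewrite ?(Cpown_Cpow t), (Cpown_Cpow (xi p)). f_equal; ring.
Qed.

Lemma act_target (p : nat) (t : C) (j : nat) (y : C * C) :
  actV2 p p 0 0 1 t j y = ((t ^ p * fst y)%C, (xi p ^ j * snd y)%C).
Proof.
  unfold actV2, actV. rewrite Nat.mul_0_r, Nat.mul_1_r.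
  cbn [Cpown fst snd]. rewrite ?(Cpown_Cpow t), (Cpown_Cpow (xi p)). f_equal; ring.
Qed.

Definition equivariant_map (p : nat) (x : C * C) : C * C := normalize (poly_map p x).

Theorem lemma4p2 (p : nat) (hp : prime (Z.of_nat p)) :
  exists h : C * C -> C * C,
    (forall x, in_sphere x -> in_sphere (h x)) /\
    continuous_on_sphere h /\
    (forall (t : C) (j : nat) (x : C * C), Cmod t = 1 -> in_sphere x ->
       h (actV2 p 1 0 1 1 t j x) = actV2 p p 0 0 1 t j (h x)).
Proof.
  assert (Hp : (0 < p)%nat) by (destruct hp as [Hgt1 _]; lia).
  exists (equivariant_map p); unfold equivariant_map; split; [|split].
  - intros x Hx. apply normalize_in_sphere, poly_map_nonvanishing; assumption.
  - apply continuous_on_sphere_of_continuous. intros x Hx.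
    apply (continuous_comp (poly_map p) normalize).
    + apply continuous_poly_map.
    + apply continuous_normalize, poly_map_nonvanishing; assumption.
  - intros t j x Ht _.
    assert (Htp : Cmod (t ^ p) = 1) by (rewrite Cmod_pow, Ht; apply pow1).
    rewrite act_source, act_target, poly_map_equivariant, normalize_unitary;
      auto using Cmod_xi_pow, xi_pow_root_of_unity.
Qed.
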